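(* Let $d$ be a nonnegative integer and let $H$ be a multigraph of even order with $\Delta(H) \le d+1$, having exactly $r$ vertices of degree $d+1$, and with $d+1 < \Gamma(H) \le d+2$. Let $S \subseteq V(H)$ with $|S|$ odd, $|S|\ge 3$, such that $\langle S\rangle$ is $(d+1)$-overfull in $H$ and $\operatorname{sl}(\langle S\rangle, d+1)$ is minimum among all $(d+1)$-overfull induced odd-order subgraphs of $H$. Then $\Delta(H_S)\le d+1$, $\Gamma(H_S)\le d+2$, and $H_S$ has at most $r$ vertices of degree $d+1$; similarly $\Delta(H_{S^c})\le d+1$, $\Gamma(H_{S^c})\le d+2$, and $H_{S^c}$ has at most $r$ vertices of degree $d+1$, where $S^c=V(H)\setminus S$.
   Context: Multigraphs are finite and loopless, multiple edges allowed. For $S \subseteq V(H)$, $\langle S\rangle$ is the induced subgraph. For a multigraph $K$ of odd order $n(K)\ge 3$ with $e(K)$ edges, $t(K) = 2e(K)/(n(K)-1)$; $K$ is $k$-overfull if $t(K)>k$. The $k$-slack is $\operatorname{sl}(K,k) = (k+1)(n(K)-1)/2 - e(K)$. $\Gamma(H) = \max\{t(\langle R\rangle) : R\subseteq V(H), |R| \text{ odd}, |R|\ge 3\}$ (statements about $\Gamma$ of a multigraph with no such $R$ are vacuous). Shrinking: for a nonempty proper subset $S$ of $V(H)$, $H_S$ has vertex set $(V(H)\setminus S)\cup\{s\}$ for a new vertex $s$; its edges are the edges of $H - S$ together with, for each $u \notin S$, exactly as many edges $us$ as there are edges of $H$ joining $u$ to vertices of $S$. *)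

From mathcomp Require Import all_boot all_order all_algebra.
Set Implicit Arguments. Unset Strict Implicit. Unset Printing Implicit Defensive.
Import Order.TTheory GRing.Theory Num.Theory.

(* A multigraph H is given by a finite vertex set V : {set T} inside a finType T
   and an edge-multiplicity function m : T -> T -> nat (m u v = number of edges
   joining u and v).  Only the values of m on V matter. *)

Definition is_multigraph (T : finType) (m : T -> T -> nat) : Prop :=
  (forall u v, m u v = m v u) /\ (forall v, m v v = 0%N).

Definition deg (T : finType) (V : {set T}) (m : T -> T -> nat) (v : T) : nat :=
  (\sum_(u in V) m v u)%N.

Definition maxdeg_le (T : finType) (V : {set T}) (m : T -> T -> nat) (k : nat) : Prop :=
  forall v, v \in V -> (deg V m v <= k)%N.

Definition num_deg (T : finType) (V : {set T}) (m : T -> T -> nat) (k : nat) : nat :=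
  #|[set v in V | deg V m v == k]|.

Definition nedges (T : finType) (m : T -> T -> nat) (R : {set T}) : nat :=
  (\sum_(u in R) \sum_(v in R) m u v)./2.

Definition tval (T : finType) (m : T -> T -> nat) (R : {set T}) : rat :=
  ((2 * nedges m R)%:R / (#|R|.-1)%:R)%R.

Definition overfull (T : finType) (m : T -> T -> nat) (R : {set T}) (k : nat) : Prop :=
  (k%:R < tval m R)%R.

Definition slack (T : finType) (m : T -> T -> nat) (R : {set T}) (k : nat) : rat :=
  (((k.+1 * #|R|.-1)%:R / 2%:R) - (nedges m R)%:R)%R.

Definition odd_sub (T : finType) (V : {set T}) (R : {set T}) : bool :=
  [&& R \subset V, odd #|R| & (3 <= #|R|)%N].

(* Gamma(H) = max t(<R>) over odd R with |R| >= 3 (0 if there is no such R;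
   all t values are >= 0, so this only affects the vacuous case) *)
Definition Gamma (T : finType) (V : {set T}) (m : T -> T -> nat) : rat :=
  (\big[Num.max/0]_(R : {set T} | odd_sub V R) tval m R)%R.

(* Shrinking S to a new vertex s : H_S lives on option T, with s = None. *)
Definition shrinkV (T : finType) (V S : {set T}) : {set option T} :=
  None |: [set Some x | x in V :\: S].

Definition shrinkm (T : finType) (m : T -> T -> nat) (S : {set T})
  (a b : option T) : nat :=
  match a, b with
  | Some u, Some v => m u v
  | Some u, None => (\sum_(x in S) m u x)%N
  | None, Some v => (\sum_(x in S) m v x)%N
  | None, None => 0%N
  end.

From Pilot Require Import Defs.
From mathcomp Require Import all_boot all_order all_algebra.
From mathcomp Require Import lra zify.
Import Order.TTheory GRing.Theory Num.Theory.
Set Implicit Arguments. Unset Strict Implicit.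

(** The vertex of H_S obtained by shrinking S has degree e(S, S^c) <= d: all
    degrees of H are at most d+1, so e(S, S^c) <= (d+1)|S| - 2e(S), and
    2e(S) > (d+1)(|S|-1) since S is overfull.  The other vertices keep their
    degrees.  An odd set of H_S avoiding the new vertex is an odd set of H;
    otherwise it is the new vertex together with an even set R of S^c, and its
    t-value can exceed d+2 only if S u R is an overfull odd set of smaller slack
    than S.  For H_{S^c} the new vertex comes with an even R inside S; the odd
    set S \ R is either not overfull or of slack at least that of S, which
    forces 2e(R) + 2e(R, S \ R) >= (d+1)|R|, and the degree sum over R then
    bounds e(R, S^c). *)

Lemma disjointDr (T : finType) (A B : {set T}) : [disjoint A & B :\: A].
Proof. by rewrite disjoint_sym; case/subsetDP: (subxx (B :\: A)). Qed.

Lemma setDK (T : finType) (A B : {set T}) : A \subset B -> A :|: B :\: A = B.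
Proof. by move=> AB; rewrite -[RHS](setID B A) (setIidPr AB). Qed.

Section Cross.
Variables (T : finType) (m : T -> T -> nat).

(* For disjoint A and B this is e(A, B), while cross A A = 2 e(<A>). *)
Definition cross (A B : {set T}) : nat := \sum_(u in A) \sum_(v in B) m u v.

Lemma sum_setU (F : T -> nat) (A B : {set T}) : [disjoint A & B] ->
  \sum_(v in A :|: B) F v = \sum_(v in A) F v + \sum_(v in B) F v.
Proof. by move=> dAB; rewrite -bigU //; apply: eq_bigl => v; rewrite inE. Qed.

Lemma cross_setUr (A B C : {set T}) : [disjoint B & C] ->
  cross A (B :|: C) = cross A B + cross A C.
Proof. by move=> dBC; rewrite /cross -big_split; apply: eq_bigr => u _; apply: sum_setU. Qed.

Hypothesis msym : forall u v, m u v = m v u.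

Lemma cross_sym (A B : {set T}) : cross A B = cross B A.
Proof. by rewrite /cross exchange_big; apply: eq_bigr => u _; apply: eq_bigr. Qed.

Lemma cross_setUl (A B C : {set T}) : [disjoint A & B] ->
  cross (A :|: B) C = cross A C + cross B C.
Proof. by move=> dAB; rewrite cross_sym cross_setUr // !(cross_sym C). Qed.

Lemma cross_setU (A B : {set T}) : [disjoint A & B] ->
  cross (A :|: B) (A :|: B) = cross A A + cross B B + 2 * cross A B.
Proof. by move=> dAB; rewrite cross_setUl // !cross_setUr // (cross_sym B A); lia. Qed.

Hypothesis m0 : forall v, m v v = 0.

Lemma cross_set1 x : cross [set x] [set x] = 0.
Proof. by rewrite /cross !big_set1 m0. Qed.

Lemma cross_self_even (A : {set T}) : ~~ odd (cross A A).
Proof.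
have [n] := ubnP #|A|; elim: n A => // n IHn A.
have [->|[x Ax]] := set_0Vmem A; first by rewrite /cross big_set0.
rewrite -(setD1K Ax) ltnS cardsU1 !inE eqxx /= => ltAn.
rewrite cross_setU ?disjoints1 ?inE ?eqxx // cross_set1 oddD oddM addbF.
exact: IHn.
Qed.

Lemma double_nedges (A : {set T}) : 2 * nedges m A = cross A A.
Proof. by rewrite /nedges -/(cross A A) mul2n even_halfK // cross_self_even. Qed.

End Cross.

Section Ratios.
Variables (T : finType) (m : T -> T -> nat).
Hypotheses (msym : forall u v, m u v = m v u) (m0 : forall v, m v v = 0).
Local Open Scope ring_scope.

Lemma tval_le_nat (R : {set T}) c : (1 < #|R|)%N ->
  (Defs.tval m R <= c%:R) = (cross m R R <= c * #|R|.-1)%N.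
Proof.
move=> R2; rewrite /Defs.tval double_nedges // ler_pdivrMr ?ltr0n; last by lia.
by rewrite -natrM ler_nat.
Qed.

Lemma overfull_nat (R : {set T}) k : (1 < #|R|)%N ->
  overfull m R k = (k * #|R|.-1 < cross m R R)%N.
Proof.
move=> R2; rewrite /overfull /Defs.tval double_nedges // ltr_pdivlMr ?ltr0n; last by lia.
by rewrite -natrM ltr_nat.
Qed.

Lemma slack_le_nat (R R' : {set T}) k :
  (slack m R k <= slack m R' k) =
  (k.+1 * #|R|.-1 + cross m R' R' <= k.+1 * #|R'|.-1 + cross m R R)%N.
Proof.
rewrite /slack -(ler_nat rat) !natrD -!double_nedges // !(natrM _ 2).
by apply/idP/idP => h; lra.
Qed.

Lemma tval_le_Gamma (V R : {set T}) : odd_sub V R -> Defs.tval m R <= Gamma V m.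
Proof. exact: le_bigmax_cond. Qed.

Lemma Gamma_subset (W V : {set T}) : W \subset V -> Gamma W m <= Gamma V m.
Proof.
move=> WV; apply/bigmax_leP; split=> [|R /and3P [RW oR R3]].
  exact: bigmax_ge_id.
by apply: tval_le_Gamma; rewrite /odd_sub (subset_trans RW WV) oR.
Qed.

End Ratios.

Section Shrink.
Variables (T : finType) (m : T -> T -> nat) (S : {set T}).

Lemma sum_imset_Some (F : option T -> nat) (A : {set T}) :
  \sum_(a in Some @: A) F a = \sum_(x in A) F (Some x).
Proof. by rewrite big_imset //; apply: in2W; apply: Some_inj. Qed.

Lemma None_notin_imset (A : {set T}) : None \notin Some @: A.
Proof. by apply/imsetP => -[]. Qed.

Lemma card_shrink_None (A : {set T}) : #|None |: Some @: A| = #|A|.+1.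
Proof. by rewrite cardsU1 None_notin_imset (card_imset _ Some_inj). Qed.

Lemma cross_shrink_Some (A : {set T}) :
  cross (shrinkm m S) (Some @: A) (Some @: A) = cross m A A.
Proof. by rewrite /cross sum_imset_Some; apply: eq_bigr => x _; rewrite sum_imset_Some. Qed.

Lemma cross_shrink_None (A : {set T}) :
  cross (shrinkm m S) (None |: Some @: A) (None |: Some @: A) =
  cross m A A + 2 * cross m A S.
Proof.
rewrite /cross !big_setU1 ?None_notin_imset //= !sum_imset_Some.
have rowE x : \sum_(a in None |: Some @: A) shrinkm m S (Some x) a =
    \sum_(y in S) m x y + \sum_(y in A) m x y.
  by rewrite big_setU1 ?None_notin_imset //= sum_imset_Some.
by rewrite (eq_bigr _ (fun x _ => rowE x)) big_split /=; lia.
Qed.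

Lemma tval_shrink_Some (A : {set T}) :
  Defs.tval (shrinkm m S) (Some @: A) = Defs.tval m A.
Proof.
by rewrite /Defs.tval /nedges -!/(cross _ _ _) cross_shrink_Some card_imset //; apply: Some_inj.
Qed.

Lemma shrinkm_sym : (forall u v, m u v = m v u) ->
  forall a b, shrinkm m S a b = shrinkm m S b a.
Proof. by move=> msym [u|] [v|] /=. Qed.

Lemma shrinkm_loop : (forall v, m v v = 0) -> forall a, shrinkm m S a a = 0.
Proof. by move=> m0 [u|] /=. Qed.

Variable V : {set T}.

Lemma subset_shrinkV (R : {set option T}) : R \subset shrinkV V S ->
  [set x | Some x \in R] \subset V :\: S /\
  R = if None \in R then None |: Some @: [set x | Some x \in R]
      else Some @: [set x | Some x \in R].
Proof.
move=> /subsetP RV; split.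
  apply/subsetP => x; rewrite inE => /RV; rewrite /shrinkV !inE.
  by case/imsetP => y yVS [->]; rewrite -in_setD.
apply/setP => -[x|]; case: ifP => NR; rewrite ?in_setU1 ?(mem_imset _ _ Some_inj) ?inE //.
by rewrite (negbTE (None_notin_imset _)).
Qed.

Lemma Gamma_shrink c :
  (forall u v, m u v = m v u) -> (forall v, m v v = 0) ->
  (Gamma (V :\: S) m <= c%:R)%R ->
  (forall R : {set T}, R \subset V :\: S -> ~~ odd #|R| ->
     cross m R R + 2 * cross m R S <= c * #|R|) ->
  (Gamma (shrinkV V S) (shrinkm m S) <= c%:R)%R.
Proof.
move=> msym m0 GammaVS evenR; apply/bigmax_leP; split=> // R /and3P [RV oR R3].
have [AVS eR] := subset_shrinkV RV; set A := [set x | Some x \in R] in AVS eR.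
rewrite {}eR in oR R3 *; case: ifP => _ in oR R3 *.
- rewrite card_shrink_None in oR R3.
  rewrite tval_le_nat ?cross_shrink_None ?card_shrink_None //.
  + exact: evenR.
  + exact: shrinkm_sym.
  + exact: shrinkm_loop.
  + exact: ltnW.
- rewrite (card_imset _ Some_inj) in oR R3.
  rewrite tval_shrink_Some; apply: le_trans GammaVS; apply: tval_le_Gamma.
  by rewrite /odd_sub AVS oR R3.
Qed.

Hypothesis SV : S \subset V.

Lemma deg_shrink_Some u : deg (shrinkV V S) (shrinkm m S) (Some u) = deg V m u.
Proof.
rewrite /deg /shrinkV big_setU1 ?None_notin_imset //= sum_imset_Some.
by rewrite [RHS](big_setID S) /= (setIidPr SV).
Qed.

Lemma deg_shrink_None : deg (shrinkV V S) (shrinkm m S) None = cross m (V :\: S) S.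
Proof. by rewrite /deg /shrinkV big_setU1 ?None_notin_imset //= sum_imset_Some. Qed.

Lemma maxdeg_shrink (k : nat) : maxdeg_le V m k -> cross m (V :\: S) S <= k ->
  maxdeg_le (shrinkV V S) (shrinkm m S) k.
Proof.
move=> maxdegV crossk [u|] /=; last by rewrite deg_shrink_None.
rewrite deg_shrink_Some /shrinkV !inE => /imsetP [x]; rewrite inE => /andP [_ xV] [->].
exact: maxdegV.
Qed.

Lemma num_deg_shrink (k : nat) : cross m (V :\: S) S != k ->
  num_deg (shrinkV V S) (shrinkm m S) k <= num_deg V m k.
Proof.
move=> crossk; rewrite /num_deg -[X in _ <= X](card_imset _ Some_inj); apply: subset_leq_card.
apply/subsetP => -[u|]; rewrite !inE; last by rewrite deg_shrink_None (negbTE crossk) andbF.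
rewrite deg_shrink_Some => /andP [/imsetP [x]]; rewrite inE => /andP [_ xV] [->] degu.
by rewrite (mem_imset _ _ Some_inj) inE xV.
Qed.

End Shrink.

Section MinimalSlack.
Variables (T : finType) (V S : {set T}) (m : T -> T -> nat) (d : nat).
Hypotheses (msym : forall u v, m u v = m v u) (m0 : forall v, m v v = 0).
Hypothesis maxdegV : maxdeg_le V m d.+1.
Hypothesis oddS : odd_sub V S.
Hypothesis overfullS : overfull m S d.+1.
Hypothesis slackS_min : forall R : {set T}, odd_sub V R -> overfull m R d.+1 ->
  (slack m S d.+1 <= slack m R d.+1)%R.

Let SV : S \subset V. Proof. by case/and3P: oddS. Qed.
Let S3 : 3 <= #|S|. Proof. by case/and3P: oddS. Qed.

Lemma cross_setD_le (A : {set T}) : A \subset V ->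
  cross m A A + cross m A (V :\: A) <= d.+1 * #|A|.
Proof.
move=> AV; rewrite -cross_setUr ?disjointDr // setDK // /cross mulnC -sum_nat_const.
by apply: leq_sum => v Av; apply: maxdegV; apply: (subsetP AV).
Qed.

Lemma overfullS_nat : d.+1 * #|S|.-1 < cross m S S.
Proof. by rewrite -overfull_nat //; lia. Qed.

Lemma cross_compl_le : cross m (V :\: S) S <= d.
Proof. by rewrite cross_sym //; have := cross_setD_le SV; have := overfullS_nat; nia. Qed.

Lemma odd_not_overfull_or_slack_ge (R : {set T}) : R \subset V -> odd #|R| ->
  cross m R R <= d.+1 * #|R|.-1 \/
  d.+2 * #|S|.-1 + cross m R R <= d.+2 * #|R|.-1 + cross m S S.
Proof.
move=> RV oR; have [R1|R3] := ltnP #|R| 3.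
  have /cards1P [x ->] : #|R| == 1 by case: #|R| oR R1 => [|[|[|]]].
  by left; rewrite cross_set1.
case: (leqP (cross m R R) (d.+1 * #|R|.-1)) => [|ovR]; [by left | right].
rewrite -slack_le_nat //; apply: slackS_min; first by rewrite /odd_sub RV oR R3.
by rewrite overfull_nat //; lia.
Qed.

Lemma even_outside_cross_le (R : {set T}) : R \subset V :\: S -> ~~ odd #|R| ->
  cross m R R + 2 * cross m R S <= d.+2 * #|R|.
Proof.
move=> RVS evR; have /subsetDP [RV dRS] := RVS.
have dSR : [disjoint S & R] by rewrite disjoint_sym.
have cardSR : #|S :|: R| = #|S| + #|R|.
  by rewrite cardsU (disjoint_setI0 dSR) cards0 subn0.
have SRV : S :|: R \subset V by rewrite subUset SV.
have oSR : odd #|S :|: R| by rewrite cardSR oddD (negbTE evR) addbF; case/and3P: oddS.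
have := overfullS_nat; have := odd_not_overfull_or_slack_ge SRV oSR.
by rewrite cardSR (cross_setU msym) // (cross_sym msym S R); nia.
Qed.

Lemma even_inside_cross_le (R : {set T}) : R \subset S -> ~~ odd #|R| ->
  cross m R R + 2 * cross m R (V :\: S) <= d.+2 * #|R|.
Proof.
move=> RS evR; set Q := S :\: R.
have dRQ : [disjoint R & Q] := disjointDr R S.
have dSc : [disjoint S & V :\: S] := disjointDr S V.
have dQ : [disjoint Q & V :\: S] := disjointWl (subsetDl S R) dSc.
have SE : R :|: Q = S := setDK RS.
have VRE : V :\: R = Q :|: V :\: S.
  rewrite -[in LHS](setDK SV) setDUl; congr (_ :|: _); apply/setDidPl.
  by rewrite disjoint_sym (disjointWl RS dSc).
have cardS : #|S| = #|R| + #|Q|.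
  by rewrite -SE cardsU (disjoint_setI0 dRQ) cards0 subn0.
have oQ : odd #|Q|.
  by move: oddS; rewrite /odd_sub cardS oddD (negbTE evR) => /and3P [].
have := odd_not_overfull_or_slack_ge (subset_trans (subsetDl S R) SV) oQ.
have := cross_setD_le (subset_trans RS SV); rewrite VRE (cross_setUr _ _ dQ).
have crossS : cross m S S = cross m R R + cross m Q Q + 2 * cross m R Q.
  by rewrite -SE (cross_setU msym).
have Q1 : 0 < #|Q| by case: #|Q| oQ.
by have := overfullS_nat; rewrite crossS cardS -/Q; nia.
Qed.

Hypothesis GammaV : (Gamma V m <= d.+2%:R)%R.

Lemma shrink_bounds :
  [/\ maxdeg_le (shrinkV V S) (shrinkm m S) d.+1,
      (Gamma (shrinkV V S) (shrinkm m S) <= d.+2%:R)%R &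
      num_deg (shrinkV V S) (shrinkm m S) d.+1 <= num_deg V m d.+1].
Proof.
split.
- by apply: maxdeg_shrink => //; apply: leqW cross_compl_le.
- apply: (Gamma_shrink msym m0); last exact: even_outside_cross_le.
  exact: le_trans (Gamma_subset m (subsetDl V S)) GammaV.
- by apply: (num_deg_shrink SV); rewrite neq_ltn ltnS cross_compl_le.
Qed.

Lemma shrink_compl_bounds :
  [/\ maxdeg_le (shrinkV V (V :\: S)) (shrinkm m (V :\: S)) d.+1,
      (Gamma (shrinkV V (V :\: S)) (shrinkm m (V :\: S)) <= d.+2%:R)%R &
      num_deg (shrinkV V (V :\: S)) (shrinkm m (V :\: S)) d.+1 <= num_deg V m d.+1].
Proof.
have ScE : V :\: (V :\: S) = S by rewrite setDDr setDv set0U (setIidPr SV).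
have cross_le : cross m (V :\: (V :\: S)) (V :\: S) <= d.
  by rewrite ScE (cross_sym msym) cross_compl_le.
split.
- exact: (maxdeg_shrink (subsetDl V S) maxdegV (leqW cross_le)).
- apply: (Gamma_shrink msym m0); rewrite ScE.
    exact: le_trans (Gamma_subset m SV) GammaV.
  exact: even_inside_cross_le.
- by apply: (num_deg_shrink (subsetDl V S)); rewrite neq_ltn ltnS cross_le.
Qed.

End MinimalSlack.

Theorem mainTheorem6 (T : finType) (V : {set T}) (m : T -> T -> nat)
  (d r : nat) (S : {set T}) :
  is_multigraph m ->
  ~~ odd #|V| ->
  maxdeg_le V m d.+1 ->
  num_deg V m d.+1 = r ->
  (d.+1%:R < Gamma V m)%R ->
  (Gamma V m <= d.+2%:R)%R ->
  odd_sub V S ->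
  overfull m S d.+1 ->
  (forall R : {set T}, odd_sub V R -> overfull m R d.+1 ->
     (slack m S d.+1 <= slack m R d.+1)%R) ->
  [/\ maxdeg_le (shrinkV V S) (shrinkm m S) d.+1,
      (Gamma (shrinkV V S) (shrinkm m S) <= d.+2%:R)%R &
      (num_deg (shrinkV V S) (shrinkm m S) d.+1 <= r)%N] /\
  [/\ maxdeg_le (shrinkV V (V :\: S)) (shrinkm m (V :\: S)) d.+1,
      (Gamma (shrinkV V (V :\: S)) (shrinkm m (V :\: S)) <= d.+2%:R)%R &
      (num_deg (shrinkV V (V :\: S)) (shrinkm m (V :\: S)) d.+1 <= r)%N].
Proof.
move=> [msym m0] _ maxdegV <- _ GammaV oddS overfullS slackS_min.
split; [exact: shrink_bounds | exact: shrink_compl_bounds].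
Qed.
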